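(* Let $\kappa\ge 3$ be an integer, $\mathcal{P}_0$ a finite set of primes, and $\omega$ a nonnegative integer-valued function on the primes with $\omega(p)<\kappa$ for $p\in\mathcal{P}_0$, $\omega(p)=\kappa$ for primes $p\notin\mathcal{P}_0$, and $\omega(p)<p$ for all primes $p$. Define $\omega_0(p)=\kappa$ for $p>\kappa$ and $\omega_0(p)=\omega(p)$ for $p\le\kappa$. Then for all $z>0$, \[L(z,\omega)\geq \prod_{\substack{p\in\mathcal{P}_0\\ p>\kappa}}\frac{p-\kappa}{p-\omega(p)}\,L(z,\omega_0).\]
   Context: For a function $h$ on the primes with $0\le h(p)<p$ for all $p$, and $z>0$, define $L(z,h)=\sum_{q\leq z}\mu^2(q)\prod_{p\mid q}\frac{h(p)}{p-h(p)}$, where $q$ runs over positive integers and $\mu$ is the Möbius function. *)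

From mathcomp Require Import all_boot all_order all_algebra.
Set Implicit Arguments. Unset Strict Implicit. Unset Printing Implicit Defensive.
Import Order.TTheory GRing.Theory Num.Theory.
Local Open Scope ring_scope.

Definition squarefree (q : nat) : bool :=
  [forall d : 'I_q.+1, (1 < d)%N ==> ~~ ((d : nat) ^ 2 %| q)%N].

Definition mu2 (R : pzRingType) (q : nat) : R := if squarefree q then 1 else 0.

Definition L (R : archiRealFieldType) (z : R) (h : nat -> nat) : R :=
  \sum_(1 <= q < (Num.truncn z).+1)
     mu2 R q * \prod_(p <- primes q) ((h p)%:R / ((p%:R : R) - (h p)%:R)).

Definition omega0 (kappa : nat) (omega : nat -> nat) (p : nat) : nat :=
  if (kappa < p)%N then kappa else omega p.

From mathcomp Require Import all_boot all_order all_algebra.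
From mathcomp Require Import ring lra.

Set Implicit Arguments.
Unset Strict Implicit.
Unset Printing Implicit Defensive.
Import Order.TTheory GRing.Theory Num.Theory.
Local Open Scope ring_scope.

(* Raise omega to kappa at the primes p > kappa of P0, one at a time.
   Splitting L(z, h) at p as A + g(h p) B with g(a) = a / (p - a), where A
   sums over the q <= z coprime to p and B over the multiples of p with the
   factor at p removed, the map b p |-> b sends the nonzero terms of B to terms
   of A, so B <= A.  Hence a |-> (p - a) (A + g(a) B) = (p - a) A + a B is
   nonincreasing, and raising h p from omega p to kappa multiplies L by at
   most (p - omega p) / (p - kappa). *)

Lemma sum_dvdn_nat (M : nmodType) (F : nat -> M) p N : (0 < p)%N ->
  \sum_(1 <= q < N.+1 | (p %| q)%N) F q = \sum_(1 <= b < (N %/ p).+1) F (b * p)%N.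
Proof.
move=> p_gt0; rewrite big_mkcond /=.
elim: N => [|N IHN]; first by rewrite div0n !big_geq.
rewrite big_nat_recr //= IHN divnS //.
case pN: (p %| N.+1)%N; last by rewrite addr0.
rewrite add1n [RHS]big_nat_recr //=; congr (_ + F _).
by have := divnK pN; rewrite divnS // pN add1n.
Qed.

Lemma squarefree_dvd d m : (0 < m)%N -> (d %| m)%N -> squarefree m -> squarefree d.
Proof.
move=> m_gt0 dvd_dm /forallP sqf_m; apply/forallP => e; apply/implyP => e_gt1.
have e_lt : (e < m.+1)%N by rewrite (leq_trans (ltn_ord e)) // ltnS dvdn_leq.
apply: contra (implyP (sqf_m (Ordinal e_lt)) e_gt1) => /= dvd_e2d.
exact: dvdn_trans dvd_e2d dvd_dm.
Qed.

Lemma dvdn_not_squarefreeM p b : (1 < p)%N -> (0 < b)%N -> (p %| b)%N ->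
  ~~ squarefree (b * p).
Proof.
move=> p_gt1 b_gt0 dvd_pb; apply/forallPn.
have p_lt : (p < (b * p).+1)%N by rewrite ltnS leq_pmull.
by exists (Ordinal p_lt); rewrite /= p_gt1 negbK mulnC expnS expn1 dvdn_mul.
Qed.

Lemma perm_primesM_prime b p : prime p -> (0 < b)%N -> ~~ (p %| b)%N ->
  perm_eq (primes (b * p)) (p :: primes b).
Proof.
move=> pr_p b_gt0 ndvd_pb; apply: uniq_perm; first exact: primes_uniq.
  by rewrite /= primes_uniq andbT mem_primes pr_p b_gt0 (negbTE ndvd_pb).
by move=> r; rewrite primesM // ?prime_gt0 // in_cons orbC primes_prime // mem_seq1.
Qed.

Lemma scaled_weight_le (R : realFieldType) (P x y A B : R) :
  0 <= x -> x <= y -> y < P -> 0 <= B -> B <= A ->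
  (P - y) / (P - x) * (A + y / (P - y) * B) <= A + x / (P - x) * B.
Proof.
move=> x_ge0 le_xy lt_yP B_ge0 le_BA.
have Px_neq0 : P - x != 0 by rewrite subr_eq0 gt_eqF //; lra.
have Py_neq0 : P - y != 0 by rewrite subr_eq0 gt_eqF //; lra.
have -> : (P - y) / (P - x) * (A + y / (P - y) * B)
          = ((P - y) * A + y * B) / (P - x) by field; rewrite Px_neq0 Py_neq0.
have -> : A + x / (P - x) * B = ((P - x) * A + x * B) / (P - x) by field.
have Px_inv_ge0 : 0 <= (P - x)^-1 by rewrite invr_ge0 subr_ge0; lra.
rewrite ler_wpM2r //.
have : 0 <= (y - x) * (A - B) by apply: mulr_ge0; rewrite subr_ge0.
nra.
Qed.

Section SieveSum.
Variable R : archiRealFieldType.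

Definition sieve_weight (h : nat -> nat) (p : nat) : R :=
  (h p)%:R / (p%:R - (h p)%:R).

Definition sieve_term (h : nat -> nat) (P : pred nat) (q : nat) : R :=
  mu2 R q * \prod_(r <- primes q | P r) sieve_weight h r.

Lemma mu2_ge0 q : 0 <= mu2 R q.
Proof. by rewrite /mu2; case: ifP. Qed.

Lemma prod_sieve_weight_ge0 h P q : (forall r, prime r -> (h r < r)%N) ->
  0 <= \prod_(r <- primes q | P r) sieve_weight h r.
Proof.
move=> h_lt; rewrite big_seq_cond; apply: prodr_ge0 => r.
rewrite mem_primes => /andP[/andP[pr_r _] _].
by rewrite divr_ge0 ?ler0n // subr_ge0 ler_nat ltnW ?h_lt.
Qed.

Lemma sieve_term_ge0 h P q : (forall r, prime r -> (h r < r)%N) ->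
  0 <= sieve_term h P q.
Proof. by move=> h_lt; rewrite mulr_ge0 ?mu2_ge0 ?prod_sieve_weight_ge0. Qed.

Lemma eq_L_prime (z : R) h h' : (forall r, prime r -> h r = h' r) ->
  L z h = L z h'.
Proof.
move=> eq_hh'; apply: eq_bigr => q _; congr (_ * _).
rewrite big_seq [RHS]big_seq; apply: eq_bigr => r.
by rewrite mem_primes => /andP[pr_r _]; rewrite eq_hh'.
Qed.

(* Only h p is made explicit: h1 is any function agreeing with h off p. *)
Lemma L_split_dvd (z : R) p h h1 : prime p -> (forall r, r != p -> h r = h1 r) ->
  L z h = \sum_(1 <= q < (Num.truncn z).+1 | ~~ (p %| q)%N) sieve_term h1 predT q
        + sieve_weight h p *
          \sum_(1 <= q < (Num.truncn z).+1 | (p %| q)%N) sieve_term h1 (predC1 p) q.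
Proof.
move=> pr_p eq_hh1; rewrite /L (bigID (fun q => (p %| q)%N)) /= addrC.
congr (_ + _).
  apply: eq_bigr => q ndvd_pq; congr (_ * _); rewrite big_seq [RHS]big_seq.
  apply: eq_bigr => r; rewrite mem_primes => /and3P[_ _ dvd_rq].
  by rewrite /sieve_weight eq_hh1 //; apply: contraNneq ndvd_pq => <-.
rewrite mulr_sumr big_nat_cond [RHS]big_nat_cond.
apply: eq_bigr => q /andP[/andP[q_gt0 _] dvd_pq].
rewrite (bigD1_seq p) ?primes_uniq ?mem_primes ?pr_p ?q_gt0 ?dvd_pq //=.
rewrite /sieve_term mulrCA; congr (_ * (_ * _)).
by apply: eq_bigr => r r_neq_p; rewrite /sieve_weight eq_hh1.
Qed.

Lemma prod_primesM_prime h b p : prime p -> (0 < b)%N -> ~~ (p %| b)%N ->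
  \prod_(r <- primes (b * p) | r != p) sieve_weight h r
  = \prod_(r <- primes b) sieve_weight h r.
Proof.
move=> pr_p b_gt0 ndvd_pb.
rewrite (perm_big _ (perm_primesM_prime pr_p b_gt0 ndvd_pb)) big_cons eqxx /=.
rewrite big_seq_cond [RHS]big_seq; apply: eq_bigl => r.
case: (boolP (r \in primes b)) => //= r_in.
by apply: contraTneq r_in => ->; rewrite mem_primes pr_p b_gt0 (negbTE ndvd_pb).
Qed.

Lemma sieve_term_mul_prime_le h b p : prime p -> (0 < b)%N ->
  (forall r, prime r -> (h r < r)%N) ->
  sieve_term h (predC1 p) (b * p)
  <= (if (p %| b)%N then 0 else sieve_term h predT b).
Proof.
move=> pr_p b_gt0 h_lt; rewrite /sieve_term; case: ifPn => [dvd_pb | ndvd_pb].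
  have := dvdn_not_squarefreeM (prime_gt1 pr_p) b_gt0 dvd_pb.
  by rewrite /mu2 => /negbTE ->; rewrite mul0r.
rewrite prod_primesM_prime // ler_wpM2r ?prod_sieve_weight_ge0 //.
rewrite /mu2; case: ifP => [sqf_bp | _]; last by case: ifP.
have bp_gt0 : (0 < b * p)%N by rewrite muln_gt0 b_gt0 prime_gt0.
by rewrite (squarefree_dvd bp_gt0 (dvdn_mulr p (dvdnn b)) sqf_bp).
Qed.

Lemma sum_dvd_le_sum_coprime N p h :
  prime p -> (forall r, prime r -> (h r < r)%N) ->
  \sum_(1 <= q < N.+1 | (p %| q)%N) sieve_term h (predC1 p) q
  <= \sum_(1 <= q < N.+1 | ~~ (p %| q)%N) sieve_term h predT q.
Proof.
move=> pr_p h_lt; rewrite sum_dvdn_nat ?prime_gt0 //.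
apply: le_trans (_ : _ <= \sum_(1 <= b < (N %/ p).+1 | ~~ (p %| b)%N)
                           sieve_term h predT b) _.
  rewrite [X in _ <= X]big_mkcond /=; apply: ler_sum_nat => b /andP[b_gt0 _].
  by rewrite if_neg; exact: sieve_term_mul_prime_le.
rewrite [X in _ <= X](big_cat_nat _ (n := (N %/ p).+1)) //= ?ltnS ?leq_div //.
by rewrite lerDl sumr_ge0 // => b _; exact: sieve_term_ge0.
Qed.

Lemma L_raise_prime_le (z : R) h1 h2 p : prime p ->
  (forall r, r != p -> h2 r = h1 r) -> (forall r, prime r -> (h1 r < r)%N) ->
  (h1 p <= h2 p)%N -> (h2 p < p)%N ->
  (p%:R - (h2 p)%:R) / (p%:R - (h1 p)%:R) * L z h2 <= L z h1.
Proof.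
move=> pr_p eq_h21 h1_lt le_h12 lt_h2p.
rewrite (L_split_dvd z pr_p eq_h21).
rewrite (L_split_dvd z (h1 := h1) pr_p (fun _ _ => erefl)).
apply: scaled_weight_le; rewrite ?ler0n ?ler_nat ?ltr_nat //.
  by rewrite sumr_ge0 // => q _; exact: sieve_term_ge0.
exact: sum_dvd_le_sum_coprime.
Qed.

Definition raise_on (kappa : nat) (omega : nat -> nat) (s : seq nat) (r : nat) :=
  if r \in s then kappa else omega r.

Lemma L_raise_on_le (z : R) kappa omega s : all prime s -> uniq s ->
  (forall p, p \in s -> (omega p <= kappa < p)%N) ->
  (forall r, prime r -> (omega r < r)%N) ->
  \prod_(p <- s) ((p%:R - kappa%:R) / (p%:R - (omega p)%:R))
    * L z (raise_on kappa omega s) <= L z omega.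
Proof.
move=> + + + omega_lt; elim: s => [|p s IHs] /=.
  by move=> _ _ _; rewrite big_nil mul1r.
move=> /andP[pr_p prime_s] /andP[p_notin_s uniq_s] kappa_between.
have /andP[le_omega_kappa lt_kappa_p] := kappa_between p (mem_head p s).
have {}kappa_between q : q \in s -> (omega q <= kappa < q)%N.
  by move=> q_in_s; apply: kappa_between; rewrite in_cons q_in_s orbT.
have prod_ge0 :
    0 <= \prod_(q <- s) ((q%:R - kappa%:R) / (q%:R - (omega q)%:R) : R).
  rewrite big_seq; apply: prodr_ge0 => q /kappa_between /andP[le_oq lt_kq].
  by rewrite divr_ge0 // subr_ge0 ler_nat ltnW // (leq_ltn_trans le_oq).
rewrite big_cons -mulrA mulrCA.
apply: le_trans (IHs prime_s uniq_s kappa_between); rewrite ler_wpM2l //.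
have raise_s_p : raise_on kappa omega s p = omega p.
  by rewrite /raise_on (negbTE p_notin_s).
have raise_ps_p : raise_on kappa omega (p :: s) p = kappa.
  by rewrite /raise_on mem_head.
have := L_raise_prime_le z (h1 := raise_on kappa omega s)
  (h2 := raise_on kappa omega (p :: s)) pr_p.
rewrite raise_s_p raise_ps_p; apply => //.
  by move=> r r_neq_p; rewrite /raise_on in_cons (negbTE r_neq_p).
move=> r pr_r; rewrite /raise_on; case: ifP => [/kappa_between /andP[] //|_].
exact: omega_lt.
Qed.

End SieveSum.

Theorem corollary1 (R : archiRealFieldType) (kappa : nat) (P0 : seq nat)
    (omega : nat -> nat)
    (hkappa : (3 <= kappa)%N)
    (hP0prime : all prime P0) (hP0uniq : uniq P0)
    (hin : forall p, prime p -> p \in P0 -> (omega p < kappa)%N)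
    (hout : forall p, prime p -> p \notin P0 -> omega p = kappa)
    (hlt : forall p, prime p -> (omega p < p)%N)
    (z : R) (hz : 0 < z) :
  L z omega >=
    (\prod_(p <- P0 | (kappa < p)%N)
        (((p%:R : R) - kappa%:R) / (p%:R - (omega p)%:R)))
    * L z (omega0 kappa omega).
Proof.
set P := [seq p <- P0 | (kappa < p)%N].
have omega0_raise r : prime r -> omega0 kappa omega r = raise_on kappa omega P r.
  move=> pr_r; rewrite /omega0 /raise_on /P mem_filter andbC.
  case: ifP => lt_kappa_r; rewrite ?andbT ?andbF //.
  by case: ifPn => // r_notin; rewrite hout.
rewrite -big_filter (eq_L_prime _ omega0_raise).
apply: L_raise_on_le => //; rewrite ?filter_uniq //.
  by apply/allP => p; rewrite mem_filter => /andP[_ /(allP hP0prime)].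
move=> p; rewrite mem_filter => /andP[-> p_in].
by rewrite ltnW ?hin ?(allP hP0prime).
Qed.
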